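(* Let $\ell = p_1^{d_1}\cdots p_r^{d_r}$ with distinct primes $p_i$ and $d_i \ge 1$, let $A = A_1\times\cdots\times A_r$ with $A_i$ elementary abelian of order $p_i^{d_i}$, so that $\mathrm{Aut}(A) = \mathrm{GL}(d_1,p_1)\times\cdots\times \mathrm{GL}(d_r,p_r)$, and let $U \leq \mathrm{Aut}(A)$. Put $\sigma_i(U) = U \cap \mathrm{GL}(d_i,p_i)$ and $O(U) = O_{p_1}(\sigma_1(U))\times\cdots\times O_{p_r}(\sigma_r(U))$. Then: (a) $O(U)$ is the largest normal subgroup of $U$ that centralizes a series through $A$; (b) $U$ is $F$-relevant if and only if $O(U) = \{1\}$.
   Context: $O_p(X)$ denotes the largest normal $p$-subgroup of a finite group $X$. A subgroup $N \le \mathrm{Aut}(A)$ centralizes a series through $A$ if there is an $N$-invariant series of subgroups $A = A_1' > A_2' > \cdots > A_{l+1}' = \{1\}$ such that $N$ induces the identity on every quotient $A_j'/A_{j+1}'$. A subgroup $U \le \mathrm{Aut}(A)$ is $F$-relevant if no non-trivial normal subgroup of $U$ centralizes a series through $A$. *)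

From HB Require Import structures.
From mathcomp Require Import all_boot all_fingroup all_solvable.
Set Implicit Arguments. Unset Strict Implicit. Unset Printing Implicit Defensive.
Local Open Scope group_scope.

Section Defs.
Variable gT : finGroupType.
Implicit Types (A : {group gT}) (N U : {set {perm gT}}).

Definition centralizes_series A N : Prop :=
  exists s : seq {group gT},
    [/\ (last A s :=: 1),
        all (fun H : {group gT} => [acts N, on H | 'P]) (A :: s)
      & path (fun H K : {group gT} =>
                (K \proper H) &&
                [forall a in N, forall x in H, (x^-1 * a x) \in K]) A s].

Definition F_relevant A U : Prop :=
  forall N : {group {perm gT}}, N <| U -> centralizes_series A N -> N :=: 1.

(* sigma_p(U) = U ∩ GL(d_p, p): the elements of U acting trivially on all
   the other Sylow components, i.e. on the p'-part O_{p'}(A) of A. *)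
Definition sigma A (p : nat) U : {set {perm gT}} := 'C_U('O_p^'(A) | 'P).

(* O(U) = O_{p_1}(sigma_1 U) x ... x O_{p_r}(sigma_r U), p_i ranging over the
   prime divisors of |A| (taken as the subgroup generated by the factors). *)
Definition OU A U : {set {perm gT}} :=
  << \bigcup_(p <- primes #|A|) 'O_p(sigma A p U) >>.
End Defs.

(* Maximality: along a series centralized by N, a pi-element of N fixes every
   stable pi'-subgroup (series_fixes_coprime), so it centralizes O_pi'(A).
   Hence for N <| U centralizing a series, the q-parts of elements of N lie in
   sigma_q(U), and N :&: sigma_q(U) is a q-group normal in sigma_q(U), thus
   contained in O_q(sigma_q(U)) (OU_max).
   Existence: the series is grown from 1 upwards (centralizes_series_from_steps).
   Given an O(U)-stable Z < A, choose p with O_p(A) not in Z; counting fixed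
   points modulo p, the p-group O_p(sigma_p(U)) fixes a coset Z x with
   x in O_p(A) \ Z (pgroup_fixes_coset), and the other generators of O(U)
   centralize O_p(A).  So the elements of A fixed by O(U) modulo Z form a
   stable subgroup (cent_mod, as A is abelian) properly containing Z. *)

From HB Require Import structures.
From mathcomp Require Import all_boot all_fingroup all_solvable.
From mathcomp Require Import zify.

Set Implicit Arguments. Unset Strict Implicit. Unset Printing Implicit Defensive.
Local Open Scope group_scope.

Lemma acts_closed (aT : finGroupType) (sT : finType) (to : {action aT &-> sT})
    (G : {group aT}) (S : {set sT}) :
  (forall a x, a \in G -> x \in S -> to x a \in S) -> [acts G, on S | to].
Proof.
move=> clS; apply/subsetP => a Ga; rewrite !inE.
by apply/subsetP => x Sx; rewrite inE clS.
Qed.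

Lemma bigcup_seq_subset (T : finType) (I : eqType) (r : seq I)
    (F : I -> {set T}) (X : {set T}) :
  (forall i, i \in r -> F i \subset X) -> \bigcup_(i <- r) F i \subset X.
Proof.
move=> sFX; rewrite big_seq; elim/big_ind: _ => [|S S' sSX sS'X|i /sFX //].
  exact: sub0set.
by rewrite subUset sSX.
Qed.

Section Generalities.
Variable gT : finGroupType.
Implicit Types (A G Z : {group gT}).

(* The pi-part of x is a power of x. *)
Lemma constt_in G (pi : nat_pred) x : x \in G -> x.`_pi \in G.
Proof.
move=> Gx; have sxG : <[x]> \subset G by rewrite cycle_subG.
exact: subsetP sxG _ (cycle_constt pi x).
Qed.

Lemma pgroup_of_elts (pi : nat_pred) G :
  {in G, forall x, pi.-elt x} -> pi.-group G.
Proof.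
move=> piG; apply/pgroupP => q q_pr q_dvd.
have [x Gx ox] := Cauchy q_pr q_dvd.
by have := piG x Gx; rewrite /p_elt ox pnatE.
Qed.

(* A subgroup Z that does not contain the nilpotent group A misses a Sylow
   subgroup O_p(A), since each element of A is the product of its p-parts. *)
Lemma nilpotent_pcore_not_sub A Z : nilpotent A -> ~~ (A \subset Z) ->
  exists2 p, p \in primes #|A| & ~~ ('O_p(A) \subset Z).
Proof.
move=> nilA /subsetPn[x Ax not_Zx].
have /allPn[p _ not_Zxp] :
    ~~ all (fun p : nat => x.`_p \in Z) (index_iota 0 #[x].+1).
  by apply: contra not_Zx => /allP Zx; rewrite -(prod_constt x) big_seq group_prod.
have Op_xp : x.`_p \in 'O_p(A).
  rewrite (mem_normal_Hall (nilpotent_pcore_Hall p nilA) (pcore_normal _ _)).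
    exact: p_elt_constt.
  exact: constt_in.
have not_sOZ : ~~ ('O_p(A) \subset Z) by apply: contra not_Zxp => /subsetP; apply.
exists p => //; have ntO : 'O_p(A) != 1 by apply: contra not_sOZ => /eqP->; apply: sub1G.
have [p_pr p_dvd _] := pgroup_pdiv (pcore_pgroup p A) ntO.
by rewrite mem_primes p_pr cardG_gt0 (dvdn_trans p_dvd) ?cardSg ?pcore_sub.
Qed.

End Generalities.

Section Automorphisms.
Variable gT : finGroupType.
Implicit Types (A H W : {group gT}) (N : {group {perm gT}}) (a : {perm gT}).

Lemma AutM A a : a \in Aut A -> {in A &, {morph a : x y / x * y}}.
Proof. by move/Aut_morphic/morphicP. Qed.

Lemma Aut1g A a : a \in Aut A -> a 1 = 1.
Proof. by move=> Aa; rewrite -(autmE Aa) morph1. Qed.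

Lemma AutV A a x : a \in Aut A -> x \in A -> a x^-1 = (a x)^-1.
Proof. by move=> Aa Ax; rewrite -(autmE Aa) morphV. Qed.

Lemma AutX A a x n : a \in Aut A -> x \in A -> a (x ^+ n) = a x ^+ n.
Proof. by move=> Aa Ax; rewrite -(autmE Aa) morphX. Qed.

Lemma Aut_astab_trivial A a : a \in Aut A -> a \in 'C(A | 'P) -> a = 1.
Proof.
move=> Aa /astabP fixA; apply: (eq_Aut Aa (group1 _)) => x Ax.
by rewrite perm1 [LHS]fixA.
Qed.

(* An automorphism of a nilpotent group A fixing both O_pi(A) and O_pi'(A)
   pointwise is trivial, as A = O_pi(A) * O_pi'(A). *)
Lemma Aut_pcores_trivial A (pi : nat_pred) a : nilpotent A -> a \in Aut A ->
  a \in 'C('O_pi(A) | 'P) -> a \in 'C('O_pi^'(A) | 'P) -> a = 1.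
Proof.
move=> nilA Aa /astabP fix1 /astabP fix2; apply: (Aut_astab_trivial Aa).
apply/astabP => x; rewrite -(dprodW (nilpotent_pcoreC pi nilA)).
case/mulsgP=> x1 x2 Ox1 Ox2 ->; change (a (x1 * x2) = x1 * x2).
have [Ax1 Ax2] := (subsetP (pcore_sub pi A) x1 Ox1, subsetP (pcore_sub pi^' A) x2 Ox2).
by rewrite (AutM Aa Ax1 Ax2); congr (_ * _); [apply: fix1 | apply: fix2].
Qed.

Lemma Aut_acts_char A H N : N \subset Aut A -> H \char A -> [acts N, on H | 'P].
Proof.
move=> sNA /charP[sHA charH]; apply: acts_closed => a x Na Hx.
have Aa := subsetP sNA a Na; change (a x \in H).
rewrite -(charH _ (injm_autm Aa) (im_autm Aa)) -{1}(autmE Aa).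
by rewrite mem_morphim // (subsetP sHA x Hx).
Qed.

Lemma Aut_rcoset A W a x : a \in Aut A -> W \subset A -> a \in 'N(W | 'P) ->
  x \in A -> 'P^*%act (W :* x) a = W :* a x.
Proof.
move=> Aa sWA nWa Ax; apply/eqP.
rewrite /= setactE eqEcard (card_imset _ (act_inj _ _)) !card_rcoset leqnn andbT.
apply/subsetP => _ /imsetP[_ /rcosetP[w Ww ->] ->].
change (a (w * x) \in W :* a x); rewrite (AutM Aa (subsetP sWA w Ww) Ax).
apply/rcosetP; exists (a w) => //.
by rewrite -apermE astabs_act.
Qed.

Lemma Aut_astab_rcoset A W a x : a \in Aut A -> W \subset A -> a \in 'N(W | 'P) ->
  x \in A -> (a \in 'C[W :* x | 'P^*]) = (a x \in W :* x).
Proof.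
move=> Aa sWA nWa Ax; apply/astab1P/idP; rewrite (Aut_rcoset Aa sWA nWa Ax).
  by move=> <-; apply: rcoset_refl.
by move/rcoset_eqP.
Qed.

End Automorphisms.

Section Series.
Variables (gT : finGroupType) (N : {group {perm gT}}).
Implicit Types (A B H K Z : {group gT}).

Definition series_step H K : bool :=
  (K \proper H) && [forall a in N, forall x in H, (x^-1 * a x) \in K].

(* If x is in B and H, then
   y = x^-1 (b x) lies lower in the series, so b y = y by induction, whence
   b^k x = x y^k; for k = #[b] this forces the pi'-element y to have pi-order. *)
Lemma series_fixes_coprime A B (pi : nat_pred) b s H :
  N \subset Aut A -> b \in N -> pi.-elt b -> pi^'.-group B -> B \subset A ->
  b \in 'N(B | 'P) -> last H s :=: 1 -> path series_step H s ->
  {in B :&: H, forall x, b x = x}.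
Proof.
move=> sNA Nb pi_b pi'B sBA nBb; have Ab := subsetP sNA b Nb.
elim: s H => [|K s IHs] H /= => [-> _ x /setIP[_ /set1P ->]|lastK].
  exact: Aut1g Ab.
case/andP=> /andP[_ /forall_inP/(_ b Nb)/forall_inP stepK] pathK x /setIP[Bx Hx].
have Ax := subsetP sBA x Bx.
have bBx : b x \in B by rewrite -apermE astabs_act.
have [y [By Ky bx]] : exists y, [/\ y \in B, y \in K & b x = x * y].
  by exists (x^-1 * b x); rewrite groupM ?groupV ?stepK ?mulKVg.
have Ay := subsetP sBA y By.
have byy : b y = y by apply: (IHs K lastK pathK); rewrite inE By Ky.
have bkx (k : nat) : (b ^+ k) x = x * y ^+ k.
  elim: k => [|k IHk]; first by rewrite !expg0 perm1 mulg1.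
  by rewrite expgSr permM IHk (AutM Ab) ?groupX // (AutX k Ab Ay) byy bx expgS mulgA.
have /eqP : y ^+ #[b] = 1 by apply: (mulgI x); rewrite -bkx expg_order perm1 mulg1.
rewrite -order_dvdn => /pnat_dvd/(_ pi_b) pi_y.
suff /eqP: #[y] = 1%N by rewrite order_eq1 bx => /eqP->; rewrite mulg1.
exact: pnat_1 pi_y (mem_p_elt pi'B By).
Qed.

Lemma centralizes_series_coprime A (pi : nat_pred) b :
  N \subset Aut A -> centralizes_series A N -> b \in N -> pi.-elt b ->
  b \in 'C('O_pi^'(A) | 'P).
Proof.
move=> sNA [s [lastA _ pathA]] Nb pi_b; apply/astabP => x Ox.
have nOb : b \in 'N('O_pi^'(A) | 'P).
  exact: (subsetP (Aut_acts_char sNA (pcore_char _ _)) b Nb).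
change (b x = x); apply: (series_fixes_coprime sNA Nb pi_b (pcore_pgroup _ _)
  (pcore_sub _ _) nOb lastA pathA).
by rewrite inE Ox (subsetP (pcore_sub _ _) x Ox).
Qed.

Lemma centralizes_series_from_steps A :
  N \subset Aut A ->
  (forall Z, Z \proper A -> [acts N, on Z | 'P] ->
     exists Z' : {group gT}, [/\ Z \proper Z', Z' \subset A, [acts N, on Z' | 'P]
        & forall a x, a \in N -> x \in Z' -> x^-1 * a x \in Z]) ->
  centralizes_series A N.
Proof.
move=> sNA step.
suff series_to n Z : #|A| - #|Z| < n -> Z \subset A -> [acts N, on Z | 'P] ->
    exists s : seq {group gT}, [/\ last A s :=: Z,
      all (fun H : {group gT} => [acts N, on H | 'P]) (A :: s)
      & path series_step A s].
  have [s [lastA allA pathA]] := series_to _ 1%G (ltnSn _) (sub1G A)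
    (Aut_acts_char sNA (char1 A)).
  by exists s.
elim: n Z => [|n IHn] Z; first by rewrite ltn0.
move=> ltAZ sZA nZN; have [pZA | npZA] := boolP (Z \proper A); last first.
  have eZA : Z :=: A by apply/eqP; rewrite eqEproper sZA.
  by exists [::]; rewrite /= eZA (Aut_acts_char sNA (char_refl A)).
have [Z' [pZZ' sZ'A nZ'N centZ']] := step Z pZA nZN.
have [|s [lastZ' allA pathA]] := IHn Z' _ sZ'A nZ'N.
  by have := proper_card pZZ'; have := subset_leq_card sZ'A; lia.
exists (rcons s Z); rewrite last_rcons -rcons_cons all_rcons nZN allA.
rewrite rcons_path pathA /series_step lastZ' pZZ'; split => //.
by apply/forall_inP => a Na; apply/forall_inP => x Z'x; apply: centZ'.
Qed.

End Series.

Section CentralizerModulo.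
Variables (gT : finGroupType) (A Z : {group gT}) (Q : {group {perm gT}}).
Hypotheses (abA : abelian A) (sQA : Q \subset Aut A) (sZA : Z \subset A)
  (nZQ : [acts Q, on Z | 'P]).

(* The elements of A on which Q acts trivially modulo the Q-stable subgroup Z;
   since A is abelian this is a Q-stable subgroup of A containing Z. *)
Definition cent_mod : {set gT} :=
  [set y in A | [forall a in Q, y^-1 * a y \in Z]].

Lemma cent_modP y :
  reflect (y \in A /\ forall a, a \in Q -> y^-1 * a y \in Z) (y \in cent_mod).
Proof. by rewrite inE; apply: (iffP andP) => -[Ay /forall_inP]. Qed.

Lemma cent_mod_group_set : group_set cent_mod.
Proof.
apply/group_setP; split.
  by apply/cent_modP; split=> // a Qa; rewrite invg1 mul1g (Aut1g (subsetP sQA a Qa)).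
move=> y w /cent_modP[Ay cy] /cent_modP[Aw cw]; apply/cent_modP; split=> [|a Qa].
  exact: groupM.
have Aa := subsetP sQA a Qa; have Ay' : a y \in A by rewrite Aut_closed.
have Acy : y^-1 * a y \in A by rewrite groupM ?groupV.
rewrite (AutM Aa) // invMg mulgA -(mulgA w^-1).
by rewrite ((centsP abA) w^-1 (groupVr Aw) _ Acy) -mulgA groupM ?cy ?cw.
Qed.
Canonical cent_mod_group : {group gT} := Group cent_mod_group_set.

Lemma cent_mod_sub : cent_mod \subset A.
Proof. by apply/subsetP => y /cent_modP[]. Qed.

Lemma sub_cent_mod : Z \subset cent_mod.
Proof.
apply/subsetP => z Zz; apply/cent_modP; split=> [|a Qa]; first exact: subsetP sZA z Zz.
by rewrite groupM ?groupV // -apermE astabs_act // (subsetP nZQ).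
Qed.

(* Q normalises itself, so it stabilises cent_mod: for a, q in Q,
   (a y)^-1 q (a y) = a (y^-1 q' y) with q' = a q a^-1 in Q. *)
Lemma acts_cent_mod : [acts Q, on cent_mod | 'P].
Proof.
apply: acts_closed => a y Qa /cent_modP[Ay cy]; have Aa := subsetP sQA a Qa.
apply/cent_modP; split=> [|q Qq]; first by rewrite Aut_closed.
have Qq' : a * q * a^-1 \in Q by rewrite !groupM ?groupV.
have -> : q (a y) = a ((a * q * a^-1) y) by rewrite !permM permKV.
have Aq'y : (a * q * a^-1) y \in A by rewrite Aut_closed ?(subsetP sQA).
rewrite -(AutV Aa Ay) -(AutM Aa) ?groupV //.
by rewrite -apermE astabs_act ?cy // (subsetP nZQ).
Qed.

End CentralizerModulo.

Lemma pgroup_second_fixpoint (aT : finGroupType) (sT : finType) (D : {group aT})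
    (to : action D sT) (p : nat) (P : {group aT}) (S : {set sT}) (s0 : sT) :
  prime p -> p.-group P -> [acts P, on S | to] -> p %| #|S| ->
  s0 \in 'Fix_(S | to)(P) -> exists2 s, s \in 'Fix_(S | to)(P) & s != s0.
Proof.
move=> p_pr pP nSP p_dvd_S Fs0.
have p_dvd_F : p %| #|'Fix_(S | to)(P)| by rewrite /dvdn -(pgroup_fix_mod pP nSP).
have /card_gt1P[s1 [s2 [Fs1 Fs2 neq_s12]]] : 1 < #|'Fix_(S | to)(P)|.
  apply: leq_trans (prime_gt1 p_pr) (dvdn_leq _ p_dvd_F).
  by apply/card_gt0P; exists s0.
have [eq_s10 | ] := eqVneq s1 s0; last by exists s1.
by exists s2; rewrite // -eq_s10 eq_sym.
Qed.

Section FixedCoset.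
Variables (gT : finGroupType) (p : nat) (A B Z : {group gT}) (P : {group {perm gT}}).
Hypotheses (sPA : P \subset Aut A) (pP : p.-group P) (pB : p.-group B)
  (sBA : B \subset A) (nBP : [acts P, on B | 'P]) (nZP : [acts P, on Z | 'P]).

(* A p-group P of automorphisms of A that stabilises a p-subgroup B and a
   subgroup Z not containing B fixes some coset Z x with x in B \ Z: P permutes
   the p^k > 1 cosets of W = Z :&: B in B and fixes W itself, so it fixes a
   second coset W x, and then it fixes Z x as well. *)
Lemma pgroup_fixes_coset :
  ~~ (B \subset Z) -> exists2 x, x \in B :\: Z & forall a, a \in P -> a x \in Z :* x.
Proof.
move=> not_sBZ; pose W := (Z :&: B)%G.
have sWA : W \subset A := subset_trans (subsetIr Z B) sBA.
have nWa a : a \in P -> a \in 'N(W | 'P) by apply/subsetP/actsI.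
have AutP a : a \in P -> a \in Aut A by apply/subsetP.
have PWx a x : a \in P -> x \in A -> 'P^*%act (W :* x) a = W :* a x.
  by move=> Pa; apply: Aut_rcoset (AutP a Pa) sWA (nWa a Pa).
have nCP : [acts P, on rcosets W B | 'P^*].
  apply: acts_closed => a _ Pa /rcosetsP[y By ->].
  rewrite PWx ?(subsetP sBA) //; apply/rcosetsP; exists (a y) => //.
  by rewrite -apermE astabs_act ?(subsetP nBP).
have FW : (W : {set gT}) \in 'Fix_(rcosets W B | 'P^*)(P).
  rewrite inE -{1}(rcoset1 W) mem_rcosets (subsetP (mulG_subr W B)) //=.
  by apply/afixP => a Pa; rewrite -{1 2}(rcoset1 W) PWx ?(Aut1g (AutP a Pa)).
have ntB : B :!=: 1 by apply: contra not_sBZ => /eqP->; apply: sub1G.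
have [p_pr _ _] := pgroup_pdiv pB ntB.
have p_dvd_BW : p %| #|rcosets W B|.
  have [k defBW] := p_natP (pnat_dvd (dvdn_indexg B W) pB).
  have : 1 < #|B : W| by rewrite indexg_gt1 subsetI subxx andbT.
  by rewrite -/(indexg B W) defBW; case: k {defBW} => // k _; rewrite expnS dvdn_mulr.
have [Y /setIP[/rcosetsP[x Bx ->] /afixP fixWx] neq_WxW] :=
  pgroup_second_fixpoint p_pr pP nCP p_dvd_BW FW.
have not_Zx : x \notin Z.
  by apply: contra neq_WxW => Zx; rewrite rcoset_id // inE Zx.
exists x => [|a Pa]; first by rewrite inE not_Zx.
have sWxZx : W :* x \subset Z :* x by rewrite rcosetS subsetIl.
apply: (subsetP sWxZx).
rewrite -(Aut_astab_rcoset (AutP a Pa) sWA (nWa a Pa) (subsetP sBA x Bx)).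
exact/astab1P/fixWx.
Qed.

End FixedCoset.

Section OU.
Variables (gT : finGroupType) (A : {group gT}) (U : {group {perm gT}}).
Hypotheses (abA : abelian A) (sUA : U \subset Aut A).

Let nilA : nilpotent A := abelian_nil abA.

Canonical OU_group : {group {perm gT}} := Eval hnf in [group of OU A U].

(* sigma_p(U) centralises the characteristic subgroup O_p'(A), hence is
   normalised by U; so is its characteristic subgroup O_p(sigma_p(U)). *)
Lemma pcore_sigma_normal (p : nat) : 'O_p(sigma A p U) <| U.
Proof.
apply: char_normal_trans (pcore_char _ _) _.
rewrite /normal /sigma subsetIl normsI ?normG //.
exact: subset_trans (Aut_acts_char sUA (pcore_char _ _)) (astab_norm _ _).
Qed.

Lemma pcore_sigma_sub_OU (p : nat) :
  p \in primes #|A| -> 'O_p(sigma A p U) \subset OU A U.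
Proof. by move=> pA; apply: sub_gen; rewrite (big_rem p pA) subsetUl. Qed.

Lemma OU_normal : OU A U <| U.
Proof.
apply/andP; split.
  rewrite gen_subG; apply: bigcup_seq_subset => p _.
  exact: normal_sub (pcore_sigma_normal p).
apply/norms_gen/norms_bigcup; elim/big_ind: _ => [|S S' nSU nS'U|p _].
- exact: subsetT.
- by rewrite subsetI nSU.
exact: normal_norm (pcore_sigma_normal p).
Qed.

Lemma OU_Aut : OU A U \subset Aut A.
Proof. exact: subset_trans (normal_sub OU_normal) sUA. Qed.

(* Take p with O_p(A) not in Z; the p-group
   O_p(sigma_p(U)) fixes a coset Z x with x in O_p(A), while for r != p the
   group O_r(sigma_r(U)) centralises O_r'(A), which contains x. *)
Lemma OU_fixes_coset (Z : {group gT}) :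
  Z \proper A -> [acts OU A U, on Z | 'P] ->
  exists2 x, x \in A :\: Z & forall a, a \in OU A U -> a x \in Z :* x.
Proof.
move=> ltZA nZO; have /andP[sZA not_sAZ] : (Z \subset A) && ~~ (A \subset Z).
  by rewrite -properE.
have [p pA not_sOpZ] := nilpotent_pcore_not_sub nilA not_sAZ.
have sPO := pcore_sigma_sub_OU pA; have sPA := subset_trans sPO OU_Aut.
have [x /setDP[Opx not_Zx] fixP] := pgroup_fixes_coset sPA (pcore_pgroup _ _)
  (pcore_pgroup p A) (pcore_sub _ _) (Aut_acts_char sPA (pcore_char p A))
  (subset_trans sPO nZO) not_sOpZ.
have Ax := subsetP (pcore_sub p A) x Opx.
have fixesP a : a \in OU A U -> (a \in 'C[Z :* x | 'P^*]) = (a x \in Z :* x).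
  by move=> Oa; apply: Aut_astab_rcoset (subsetP OU_Aut a Oa) sZA (subsetP nZO a Oa) Ax.
suff sOC : OU A U \subset 'C[Z :* x | 'P^*].
  by exists x => [|a Oa]; rewrite ?inE ?not_Zx // -fixesP ?(subsetP sOC).
rewrite gen_subG; apply: bigcup_seq_subset => r rA; apply/subsetP => a Ora.
rewrite fixesP ?(subsetP (pcore_sigma_sub_OU rA)) //.
have [erp | neq_rp] := eqVneq r p; first by apply: fixP; rewrite -erp.
have /setIP[_ /astabP cent_a] := subsetP (pcore_sub r _) a Ora.
have sOpOr' : 'O_p(A) \subset 'O_r^'(A).
  by apply: sub_pcore => q; rewrite !inE => /eqP->; rewrite eq_sym.
have Or'x := subsetP sOpOr' x Opx.
by rewrite [a x](cent_a x Or'x) rcoset_refl.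
Qed.

(* Part (a), existence: O(U) centralizes a series through A, obtained by
   repeatedly lifting Z to the elements of A fixed by O(U) modulo Z. *)
Lemma OU_centralizes_series : centralizes_series A (OU A U).
Proof.
apply: (centralizes_series_from_steps (N := OU_group)) OU_Aut _ => Z ltZA nZO.
have sZA := proper_sub ltZA.
have [x /setDP[Ax not_Zx] fix_x] := OU_fixes_coset ltZA nZO.
exists (cent_mod_group Z abA OU_Aut); split.
- rewrite properE sub_cent_mod //=; apply/subsetPn; exists x => //.
  apply/cent_modP; split=> // a Oa; case/rcosetP: (fix_x a Oa) => z Zz ->.
  by rewrite ((centsP abA) z (subsetP sZA z Zz) x Ax) mulKg.
- exact: cent_mod_sub.
- exact: (acts_cent_mod OU_Aut nZO).
by move=> a y Oa /cent_modP[_]; apply.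
Qed.

(* Elements of a normal subgroup N of U that centralizes a series through A:
   their q-parts lie in sigma_q(U), since they centralize O_q'(A). *)
Lemma constt_sigma (N : {group {perm gT}}) (q : nat) a :
  N <| U -> centralizes_series A N -> a \in N -> a.`_q \in sigma A q U.
Proof.
move=> nNU csN Na; have sNA := subset_trans (normal_sub nNU) sUA.
have Naq := constt_in q Na; rewrite inE (subsetP (normal_sub nNU) _ Naq) /=.
exact: centralizes_series_coprime sNA csN Naq (p_elt_constt q a).
Qed.

(* ... and N meets sigma_q(U) in a q-group: the q'-part of such an element
   centralizes O_q'(A) (being in sigma_q(U)) and O_q(A) (by the series). *)
Lemma sigma_cap_pgroup (N : {group {perm gT}}) (q : nat) :
  N <| U -> centralizes_series A N -> q.-group (sigma A q U :&: N).
Proof.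
move=> nNU csN; have sNA := subset_trans (normal_sub nNU) sUA.
apply: pgroup_of_elts => y /setIP[Sy Ny]; rewrite -p_eltNK; apply/constt1P.
have Ny' := constt_in q^' Ny; have Sy' := constt_in q^' Sy.
apply: (Aut_pcores_trivial (pi := q^') nilA (subsetP sNA _ Ny')).
  by case/setIP: Sy'.
exact: centralizes_series_coprime sNA csN Ny' (p_elt_constt _ _).
Qed.

Lemma OU_max (N : {group {perm gT}}) :
  N <| U -> centralizes_series A N -> N \subset OU A U.
Proof.
move=> nNU csN; have sNA := subset_trans (normal_sub nNU) sUA.
apply/subsetP => a Na; rewrite -(prod_constt a) group_prod // => q _.
have Saq := constt_sigma q nNU csN Na.
have [qA | q'A] := boolP (q \in primes #|A|).
  have nNS : sigma A q U :&: N <| sigma A q U := normalGI (subsetIl _ _) nNU.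
  have sNSO := pcore_max (sigma_cap_pgroup q nNU csN) nNS.
  apply: (subsetP (pcore_sigma_sub_OU qA)); apply: (subsetP sNSO).
  by rewrite inE Saq constt_in.
have defA : 'O_q^'(A) = A.
  apply/pcore_pgroup_id/pgroupP => r r_pr r_dvd; rewrite inE /=.
  by apply: contraNneq q'A => <-; rewrite mem_primes r_pr cardG_gt0.
rewrite (Aut_astab_trivial (subsetP sNA _ (constt_in q Na))) ?group1 //.
by rewrite -defA; case/setIP: Saq.
Qed.

End OU.

Theorem lemma3p3 (gT : finGroupType) (A : {group gT}) (U : {group {perm gT}})
  (abA : abelian A) (elemA : forall p : nat, prime p -> p.-abelem 'O_p(A))
  (sUAut : U \subset Aut A) :
  ([/\ OU A U <| U, centralizes_series A (OU A U)
     & forall N : {group {perm gT}},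
         N <| U -> centralizes_series A N -> N \subset OU A U])
  /\ (F_relevant A U <-> OU A U = 1).
Proof.
have nOU := OU_normal sUAut; have csOU := OU_centralizes_series abA sUAut.
have maxOU := OU_max abA sUAut.
split=> //; split=> [relU | trivOU N nNU csN].
  exact: relU (OU_group A U) nOU csOU.
by apply/trivgP; rewrite -trivOU maxOU.
Qed.
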